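(* Let $f:[0,\infty)\to\mathbb{R}$ be convex with $f(1)=0$ and let $G$ be increasing and convex with $G(0)=0$. Let $\mathcal{M}$ be a finite set with $|\mathcal{M}|\ge2$, and let $p_{M\hat M}$ be a joint distribution on $\mathcal{M}\times\mathcal{M}$ whose $M$-marginal is uniform and with $p_{M\hat M}(M\ne\hat M)=\epsilon$. Then under $p_{M\hat M}$, $$I_{G,f}(M;\hat M)\ge G\!\left(\frac{1}{|\mathcal{M}|}f\big(|\mathcal{M}|(1-\epsilon)\big)+\frac{|\mathcal{M}|-1}{|\mathcal{M}|}f\!\left(\frac{|\mathcal{M}|\epsilon}{|\mathcal{M}|-1}\right)\right).$$
   Context: $D_f(p\|q)=\sum_y q(y) f(p(y)/q(y))$ with $0f(0/0)=0$. $I_{G,f}(M;\hat M)=\min_{q_{\hat M}}\sum_m p_M(m)\,G(D_f(p_{\hat M|M=m}\|q_{\hat M}))$. *)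

From HB Require Import structures.
From mathcomp Require Import all_boot all_order all_algebra.
From mathcomp Require Import all_classical all_reals all_analysis.
Set Implicit Arguments. Unset Strict Implicit. Unset Printing Implicit Defensive.
Import Order.TTheory GRing.Theory Num.Theory.
Local Open Scope classical_set_scope.
Local Open Scope ring_scope.
Local Open Scope ereal_scope.

Definition convex_on_nonneg (R : realType) (h : R -> R) : Prop :=
  forall x y t : R, (0 <= x)%R -> (0 <= y)%R -> (0 <= t <= 1)%R ->
    (h (t * x + (1 - t) * y) <= t * h x + (1 - t) * h y)%R.

Definition nondecr_on_nonneg (R : realType) (h : R -> R) : Prop :=
  forall x y : R, (0 <= x)%R -> (x <= y)%R -> (h x <= h y)%R.

(* f'(oo) = lim_{t -> oo} f(t)/t, used for the convention 0 f(a/0) = a f'(oo) *)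
Definition fslope (R : realType) (f : R -> R) : \bar R :=
  limn (fun n : nat => ((f n%:R) / n%:R)%:E).

Definition Df (R : realType) (T : finType) (f : R -> R) (P Q : T -> R) : \bar R :=
  \sum_(y : T)
    (if (0 < Q y)%R then (Q y * f (P y / Q y))%:E
     else if P y == 0%R then 0 else (P y)%:E * fslope f).

(* G extended to \bar R by continuity at +oo *)
Definition Gext (R : realType) (G : R -> R) (x : \bar R) : \bar R :=
  match x with
  | r%:E => (G r)%:E
  | +oo => limn (fun n : nat => (G n%:R)%:E)
  | -oo => -oo
  end.

Definition is_distr (R : realType) (T : finType) (q : T -> R) : Prop :=
  (forall y, 0 <= q y)%R /\ (\sum_(y : T) q y = 1)%R.

Definition marg1 (R : realType) (M : finType) (p : M -> M -> R) (m : M) : R :=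
  (\sum_(mh : M) p m mh)%R.
Definition cond (R : realType) (M : finType) (p : M -> M -> R) (m : M) : M -> R :=
  fun mh => (p m mh / marg1 p m)%R.

(* I_{G,f}(M; Mhat) = min over distributions q of sum_m p_M(m) G(D_f(p_{Mhat|M=m} || q))
   (written as an infimum) *)
Definition IGf (R : realType) (M : finType) (G f : R -> R) (p : M -> M -> R) : \bar R :=
  ereal_inf [set \sum_(m : M) (marg1 p m)%:E * Gext G (Df f (cond p m) q)
            | q in [set q : M -> R | is_distr q]].

From HB Require Import structures.
From mathcomp Require Import all_boot all_order all_algebra.
From mathcomp Require Import all_classical all_reals all_analysis.
From mathcomp Require Import ring lra.
Set Implicit Arguments. Unset Strict Implicit. Unset Printing Implicit Defensive.
Import Order.TTheory GRing.Theory Num.Theory.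
Local Open Scope classical_set_scope.
Local Open Scope ring_scope.

(* Each summand [b f(a/b)] of [D_f] (with the convention of [Df] at [b = 0]) is
   jointly convex and positively homogeneous in [(a, b)], hence subadditive.
   Rescaling [D_f(p_{Mhat|M=m} || q)] by [p_M(m)] and merging, over all [m], the
   terms with [mhat = m] and those with [mhat <> m] bounds
   [sum_m p_M(m) D_f(p_{Mhat|M=m} || q)] below by a divergence between two-point
   distributions, which for a uniform [p_M] is the argument of [G] in the claim,
   whatever [q] is. Jensen's inequality and the monotonicity of [G] conclude; when
   some divergence is infinite, [G t <= w G (t / w) <= w G(+oo)] suffices. *)

Lemma cvge_harmonicZ (R : realType) (b : R) :
  (fun n => (b * harmonic n)%:E) @ \oo --> 0%E.
Proof.
rewrite -(mule0 b%:E).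
exact: (@cvgeZl _ _ _ (EFin \o harmonic) 0%E b%:E _ cvge_harmonic).
Qed.

Section Perspective.
Variables (R : realType) (f : R -> R).

Definition persp (a b : R) : \bar R :=
  if 0 < b then (b * f (a / b))%:E
  else if a == 0 then 0%E else (a%:E * fslope f)%E.

Lemma Df_persp (T : finType) (P Q : T -> R) :
  Df f P Q = (\sum_y persp (P y) (Q y))%E.
Proof. by []. Qed.

Lemma persp_0r a : persp a 0 = (a%:E * fslope f)%E.
Proof. by rewrite /persp ltxx; case: eqP => [->|//]; rewrite mul0e. Qed.

Lemma persp_homog c a b : 0 < c -> persp (c * a) (c * b) = (c%:E * persp a b)%E.
Proof.
move=> c_gt0; rewrite /persp pmulr_rgt0 //; case: ifP => b_gt0.
  by rewrite -EFinM -mulrA invfM mulrACA mulfV ?gt_eqF // mul1r.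
rewrite mulf_eq0 gt_eqF //=; case: ifP => _; first by rewrite mule0.
by rewrite EFinM muleA.
Qed.

Lemma persp_weight w x : 0 <= w -> persp (w * x) w = (w * f x)%:E.
Proof.
rewrite le0r => /predU1P[->|w_gt0]; first by rewrite mul0r persp_0r !mul0e mul0r.
by rewrite /persp w_gt0 [w * x]mulrC mulfK ?gt_eqF.
Qed.

Lemma persp_binary_uniformE (N eps : R) : 1 < N ->
  (persp (1 - eps) N^-1 + persp eps (1 - N^-1))%E
  = (1 / N * f (N * (1 - eps)) + (N - 1) / N * f (N * eps / (N - 1)))%:E.
Proof.
move=> N_gt1; have N_gt0 : 0 < N := lt_trans ltr01 N_gt1.
have N_neq0 : N != 0 := lt0r_neq0 N_gt0.
have N1_neq0 : N - 1 != 0 by rewrite subr_eq0 gt_eqF.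
rewrite /persp invr_gt0 N_gt0 subr_gt0 invf_lt1 // N_gt1 -EFinD.
congr (EFin _); congr (_ * f _ + _ * f _); field.
- exact: N_neq0.
- exact: N_neq0.
- exact: N_neq0.
- by apply/andP; split; [exact: N1_neq0 | exact: N_neq0].
Qed.

Hypothesis f_convex : convex_on_nonneg f.

Lemma convex_slope_le x y z : 0 <= x -> x < y -> y <= z ->
  (f y - f x) / (y - x) <= (f z - f x) / (z - x).
Proof.
move=> x_ge0 xy yz.
have zx_gt0 : 0 < z - x by rewrite subr_gt0 (lt_le_trans xy yz).
have yx_gt0 : 0 < y - x by rewrite subr_gt0.
pose t := (y - x) / (z - x).
have t01 : 0 <= t <= 1.
  by rewrite /t divr_ge0 ?(ltW yx_gt0) ?(ltW zx_gt0) //= ler_pdivrMr // mul1r lerD2r.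
have := f_convex (le_trans x_ge0 (ltW (lt_le_trans xy yz))) x_ge0 t01.
have -> : t * z + (1 - t) * x = y by rewrite /t; field; rewrite gt_eqF.
move=> conv; rewrite ler_pdivrMr //.
have -> : (f z - f x) / (z - x) * (y - x) = t * (f z - f x) by rewrite /t; ring.
lra.
Qed.

Lemma fslope_cvg : (fun n : nat => (f n%:R / n%:R)%:E) @ \oo --> fslope f.
Proof.
pose v n := ((f n.+1%:R - f 0) / n.+1%:R)%:E.
have v_nd : nondecreasing_seq v.
  move=> n m nm; rewrite lee_fin.
  have := @convex_slope_le 0 n.+1%:R m.+1%:R (lexx 0) (ltr0Sn _ _).
  by rewrite !subr0 ler_nat; apply.
suff lim_sup : (fun n : nat => (f n%:R / n%:R)%:E) @ \oo --> ereal_sup (range v).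
  by rewrite /fslope (cvg_lim _ lim_sup).
rewrite -cvg_shiftS /= -[ereal_sup _]adde0.
have -> : (fun n => (f n.+1%:R / n.+1%:R)%:E) = (fun n => v n + (f 0 * harmonic n)%:E).
  by apply/funext => n; rewrite /v /= -EFinD mulrBl addrNK.
apply: cvgeD; first by case: ereal_sup.
  exact: ereal_nondecreasing_cvgn.
exact: cvge_harmonicZ.
Qed.

Lemma fslope_ge x y : 0 <= x -> x < y -> (((f y - f x) / (y - x))%:E <= fslope f)%E.
Proof.
move=> x_ge0 xy; set s := (f y - f x) / (y - x).
have y_ge0 : 0 <= y := le_trans x_ge0 (ltW xy).
have lower : (fun n => (s + (f x - s * x) * harmonic n)%:E) @ \oo --> s%:E.
  rewrite -[s%:E]adde0; under eq_fun do rewrite EFinD.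
  by apply: cvgeD => //; [exact: cvg_cst | exact: cvge_harmonicZ].
have upper := fslope_cvg; rewrite -cvg_shiftS in upper.
rewrite -(cvg_lim _ lower) // -(cvg_lim _ upper) //.
apply: lee_lim; [exact: cvgP lower | exact: cvgP upper |].
exists (Num.bound y) => // n /= bound_le_n.
have y_le_n : y <= n.+1%:R.
  by apply: le_trans (ltW (archi_boundP y_ge0)) _; rewrite ler_nat leqW.
have nx_gt0 : 0 < n.+1%:R - x by rewrite subr_gt0 (lt_le_trans xy y_le_n).
have := convex_slope_le x_ge0 xy y_le_n; rewrite -/s ler_pdivlMr // => chord.
rewrite lee_fin (_ : s + _ = (s * n.+1%:R + f x - s * x) / n.+1%:R); last first.
  by field; rewrite addrC natr1 pnatr_eq0.
by apply: ler_wpM2r; [rewrite invr_ge0 | lra].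
Qed.

Lemma fslope_gtNy : (-oo < fslope f)%E.
Proof. by apply: lt_le_trans (fslope_ge (lexx 0) ltr01); rewrite ltNyr. Qed.

Lemma persp_gtNy a b : 0 <= a -> 0 <= b -> (-oo < persp a b)%E.
Proof.
move=> a_ge0; rewrite le0r => /predU1P[->|b_gt0]; last by rewrite /persp b_gt0 ltNyr.
rewrite persp_0r; move: a_ge0; rewrite le0r => /predU1P[->|a_gt0].
  by rewrite mul0e ltNy0.
by move: fslope_gtNy; case: (fslope f) => [r _||//]; rewrite ?gt0_muley ?ltNyr.
Qed.

Lemma persp_subadd_gt0 a1 a2 b1 b2 : 0 <= a1 -> 0 <= a2 -> 0 < b1 -> 0 < b2 ->
  (persp (a1 + a2) (b1 + b2) <= persp a1 b1 + persp a2 b2)%E.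
Proof.
move=> a1_ge0 a2_ge0 b1_gt0 b2_gt0; have b_gt0 : 0 < b1 + b2 by rewrite addr_gt0.
rewrite /persp b1_gt0 b2_gt0 b_gt0 -EFinD lee_fin.
pose t := b1 / (b1 + b2).
have t01 : 0 <= t <= 1.
  by rewrite /t divr_ge0 ?(ltW b1_gt0) ?(ltW b_gt0) //= ler_pdivrMr // mul1r lerDl ltW.
have -> : b1 * f (a1 / b1) + b2 * f (a2 / b2)
          = (b1 + b2) * (t * f (a1 / b1) + (1 - t) * f (a2 / b2)).
  by rewrite /t; field; rewrite gt_eqF.
have <- : t * (a1 / b1) + (1 - t) * (a2 / b2) = (a1 + a2) / (b1 + b2).
  by rewrite /t; field; rewrite !gt_eqF.
apply: (ler_wpM2l (ltW b_gt0)).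
exact: f_convex (divr_ge0 a1_ge0 (ltW b1_gt0)) (divr_ge0 a2_ge0 (ltW b2_gt0)) t01.
Qed.

(* The slope of [f] at infinity bounds its chord slopes: this is what makes the
   convention [0 f(a/0) = a f'(oo)] subadditive. *)
Lemma persp_subadd_0l a1 a2 b : 0 <= a1 -> 0 <= a2 -> 0 < b ->
  (persp (a1 + a2) b <= persp a1 0 + persp a2 b)%E.
Proof.
move=> a1_ge0 a2_ge0 b_gt0; rewrite persp_0r.
move: a1_ge0; rewrite le0r => /predU1P[->|a1_gt0]; first by rewrite mul0e add0e add0r.
rewrite /persp b_gt0.
have lt_a2_a : a2 / b < (a1 + a2) / b by rewrite ltr_pM2r ?invr_gt0 // ltrDr.
have := fslope_ge (divr_ge0 a2_ge0 (ltW b_gt0)) lt_a2_a.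
set s := (f ((a1 + a2) / b) - f (a2 / b)) / _ => slope_le.
suff -> : b * f ((a1 + a2) / b) = a1 * s + b * f (a2 / b).
  by rewrite EFinD EFinM leeD2r // lee_wpmul2l // lee_fin ltW.
by rewrite /s; field; rewrite addrK !gt_eqF.
Qed.

Lemma persp_subadd a1 a2 b1 b2 : 0 <= a1 -> 0 <= a2 -> 0 <= b1 -> 0 <= b2 ->
  (persp (a1 + a2) (b1 + b2) <= persp a1 b1 + persp a2 b2)%E.
Proof.
move=> a1_ge0 a2_ge0; rewrite le0r => /predU1P[->|b1_gt0];
  rewrite le0r => /predU1P[->|b2_gt0].
- by rewrite addr0 !persp_0r EFinD ge0_muleDl ?lee_fin.
- by rewrite add0r persp_subadd_0l.
- by rewrite addr0 addrC addeC persp_subadd_0l.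
- exact: persp_subadd_gt0.
Qed.

Lemma persp_add_ge0 a1 a2 b1 b2 : f 1 = 0 ->
  0 <= a1 -> 0 <= a2 -> 0 <= b1 -> 0 <= b2 -> a1 + a2 = 1 -> b1 + b2 = 1 ->
  (0 <= persp a1 b1 + persp a2 b2)%E.
Proof.
move=> f1 a1_ge0 a2_ge0 b1_ge0 b2_ge0 a_sum1 b_sum1.
have := persp_subadd a1_ge0 a2_ge0 b1_ge0 b2_ge0.
by rewrite a_sum1 b_sum1 /persp ltr01 divr1 f1 mulr0.
Qed.

Lemma persp_sum (I : Type) (r : seq I) (P : pred I) (a b : I -> R) :
  (forall i, P i -> 0 <= a i) -> (forall i, P i -> 0 <= b i) ->
  (persp (\sum_(i <- r | P i) a i) (\sum_(i <- r | P i) b i)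
     <= \sum_(i <- r | P i) persp (a i) (b i))%E.
Proof.
move=> a_ge0 b_ge0.
suff [] : [/\ 0 <= \sum_(i <- r | P i) a i, 0 <= \sum_(i <- r | P i) b i
  & (persp (\sum_(i <- r | P i) a i) (\sum_(i <- r | P i) b i)
       <= \sum_(i <- r | P i) persp (a i) (b i))%E] by [].
elim/big_rec3: _ => [|i sa sb sp Pi [sa_ge0 sb_ge0 ih]].
  by rewrite persp_0r mul0e.
split; [exact: addr_ge0 (a_ge0 i Pi) sa_ge0 | exact: addr_ge0 (b_ge0 i Pi) sb_ge0 |].
exact: le_trans (persp_subadd (a_ge0 i Pi) sa_ge0 (b_ge0 i Pi) sb_ge0) (leeD2l _ ih).
Qed.

Lemma convex_jensen (I : finType) (w x : I -> R) :
  (forall i, 0 <= w i) -> \sum_i w i = 1 -> (forall i, 0 <= x i) ->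
  f (\sum_i w i * x i) <= \sum_i w i * f (x i).
Proof.
move=> w_ge0 w1 x_ge0; rewrite -lee_fin -sumEFin.
have := persp_sum (index_enum I) (P := xpredT)
  (fun i _ => mulr_ge0 (w_ge0 i) (x_ge0 i)) (fun i _ => w_ge0 i).
rewrite w1 -[X in persp X 1]mul1r persp_weight // mul1r.
by rewrite (eq_bigr _ (fun i _ => persp_weight (x i) (w_ge0 i))).
Qed.

Lemma Df_ge0 (T : finType) (P Q : T -> R) :
  f 1 = 0 -> is_distr P -> is_distr Q -> (0 <= Df f P Q)%E.
Proof.
move=> f1 [P_ge0 P1] [Q_ge0 Q1].
apply: le_trans
  (persp_sum (index_enum T) (P := xpredT) (fun y _ => P_ge0 y) (fun y _ => Q_ge0 y)).
by rewrite P1 Q1 /persp ltr01 divr1 f1 mulr0.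
Qed.

Lemma mule_Df (T : finType) (c : R) (P Q : T -> R) :
  0 < c -> (forall y, 0 <= P y) -> (forall y, 0 <= Q y) ->
  (c%:E * Df f P Q = \sum_y persp (c * P y) (c * Q y))%E.
Proof.
move=> c_gt0 P_ge0 Q_ge0; rewrite Df_persp fin_num_sume_distrr //.
  by apply: eq_bigr => y _; rewrite persp_homog.
by move=> y z _ _; apply: ltninfty_adde_def; rewrite inE persp_gtNy.
Qed.

End Perspective.

Section Gext.
Variables (R : realType) (G : R -> R).
Hypotheses (G_nd : nondecr_on_nonneg G) (G_convex : convex_on_nonneg G) (G0 : G 0 = 0).

Lemma Gext_pinfty_ge x : 0 <= x -> ((G x)%:E <= Gext G +oo)%E.
Proof.
move=> x_ge0; rewrite /Gext.
pose u n := (G n%:R)%:E.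
have u_cvg : u @ \oo --> ereal_sup (range u).
  by apply: ereal_nondecreasing_cvgn => n m nm; rewrite lee_fin G_nd ?ler_nat.
rewrite (cvg_lim _ u_cvg) //.
apply: le_trans (ereal_sup_ubound (ex_intro2 _ _ (Num.bound x) I erefl)).
by rewrite lee_fin G_nd // ltW // archi_boundP.
Qed.

Lemma Gext_ge0 x : (0 <= x)%E -> (0 <= Gext G x)%E.
Proof.
case: x => [r||//]; last by have := Gext_pinfty_ge (lexx 0); rewrite G0.
by rewrite !lee_fin => r_ge0; rewrite -[leLHS]G0; exact: G_nd.
Qed.

Lemma le_Gext_sum (I : finType) (w : I -> R) (x : I -> \bar R) (t : R) :
  (forall i, 0 < w i) -> \sum_i w i = 1 -> (forall i, (0 <= x i)%E) -> 0 <= t ->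
  (t%:E <= \sum_i (w i)%:E * x i)%E -> ((G t)%:E <= \sum_i (w i)%:E * Gext G (x i))%E.
Proof.
move=> w_gt0 w1 x_ge0 t_ge0 t_le.
have [[i xi_oo]|x_fin] := pselect (exists i, x i = +oo%E).
  have w01 : 0 <= w i <= 1.
    by rewrite ltW //= -w1 (bigD1 i) //= lerDl; apply: sumr_ge0 => j _; exact: ltW.
  have t_w_ge0 : 0 <= t / w i := divr_ge0 t_ge0 (ltW (w_gt0 i)).
  have Gt_le : G t <= w i * G (t / w i).
    have := G_convex t_w_ge0 (lexx 0) w01.
    by rewrite !mulr0 !addr0 G0 mulr0 addr0 mulrC divfK ?gt_eqF.
  rewrite (bigD1 i) //= xi_oo; apply: lee_paddr.
    by apply: sume_ge0 => j _; apply: mule_ge0; [rewrite lee_fin ltW | exact: Gext_ge0].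
  apply: le_trans (lee_wpmul2l _ (Gext_pinfty_ge t_w_ge0)); last by rewrite lee_fin ltW.
  by rewrite -EFinM lee_fin.
have xE i : x i = (fine (x i))%:E.
  rewrite fineK // ge0_fin_numE // ltey.
  by apply/eqP => xi_oo; apply: x_fin; exists i.
rewrite (eq_bigr (fun i => (w i * G (fine (x i)))%:E)); last by move=> i _; rewrite xE.
rewrite (eq_bigr (fun i => (w i * fine (x i))%:E)) in t_le; last first.
  by move=> i _; rewrite xE.
rewrite sumEFin lee_fin in t_le; rewrite sumEFin lee_fin.
apply: le_trans (G_nd t_ge0 t_le) (convex_jensen G_convex _ w1 _) => [i|i].
  exact: ltW.
by rewrite -lee_fin -xE.
Qed.

End Gext.

Section DiagonalBound.
Variables (R : realType) (M : finType) (f : R -> R) (p : M -> M -> R).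
Hypotheses (f_convex : convex_on_nonneg f) (p_ge0 : forall m mh, 0 <= p m mh)
  (marg1_gt0 : forall m, 0 < marg1 p m).

Lemma is_distr_cond m : is_distr (cond p m).
Proof.
split=> [mh|]; first by rewrite divr_ge0 // ltW.
by rewrite /cond -mulr_suml -/(marg1 p m) mulfV ?gt_eqF.
Qed.

Lemma marg1_mul_cond m mh : marg1 p m * cond p m mh = p m mh.
Proof. by rewrite /cond mulrC divfK ?gt_eqF. Qed.

(* Data processing inequality for the indicator of the event [{M = Mhat}]. *)
Lemma sum_Df_cond_ge q : is_distr q ->
  (persp f (\sum_m p m m) (\sum_m marg1 p m * q m)
   + persp f (\sum_m \sum_(mh | mh != m) p m mh) (\sum_m marg1 p m * (1 - q m))
   <= \sum_m (marg1 p m)%:E * Df f (cond p m) q)%E.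
Proof.
move=> [q_ge0 q1].
have cond_ge0 m : forall mh, 0 <= cond p m mh := proj1 (is_distr_cond m).
under [X in (_ <= X)%E]eq_bigr => m _ do
  rewrite (mule_Df f_convex (marg1_gt0 m) (cond_ge0 m) q_ge0) (bigD1 m) //=.
rewrite big_split /=; apply: leeD.
  under [X in (_ <= X)%E]eq_bigr => m _ do rewrite marg1_mul_cond.
  by apply: (persp_sum f_convex) => m _; [exact: p_ge0 | rewrite mulr_ge0 // ltW].
have -> : \sum_m marg1 p m * (1 - q m) = \sum_m \sum_(mh | mh != m) marg1 p m * q mh.
  apply: eq_bigr => m _; rewrite -mulr_sumr; congr (_ * _).
  by rewrite -q1 (bigD1 m) //= addrC addrK.
under [X in (_ <= X)%E]eq_bigr => m _ do
  under eq_bigr => mh _ do rewrite marg1_mul_cond.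
apply: (@le_trans _ _ (\sum_m persp f (\sum_(mh | mh != m) p m mh)
                                        (\sum_(mh | mh != m) marg1 p m * q mh))%E).
  apply: (persp_sum f_convex) => m _; apply: sumr_ge0 => mh _ //.
  by rewrite mulr_ge0 // ltW.
apply: lee_sum => m _.
by apply: (persp_sum f_convex) => mh _; [exact: p_ge0 | rewrite mulr_ge0 // ltW].
Qed.

End DiagonalBound.

Theorem lemma4 (R : realType) (M : finType) (f G : R -> R) (p : M -> M -> R) (eps : R) :
  convex_on_nonneg f -> f 1 = 0 ->
  nondecr_on_nonneg G -> convex_on_nonneg G -> G 0 = 0 ->
  (1 < #|M|)%N ->
  (forall m mh, 0 <= p m mh) ->
  \sum_(m : M) \sum_(mh : M) p m mh = 1 ->
  (forall m, \sum_(mh : M) p m mh = 1 / #|M|%:R) ->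
  eps = \sum_(m : M) \sum_(mh : M | mh != m) p m mh ->
  ((G (1 / #|M|%:R * f (#|M|%:R * (1 - eps))
       + (#|M|%:R - 1) / #|M|%:R * f (#|M|%:R * eps / (#|M|%:R - 1))))%:E
     <= IGf G f p)%E.
Proof.
move=> f_convex f1 G_nd G_convex G0 M_gt1 p_ge0 p_sum1 p_unif eps_def.
set N := #|M|%:R.
have N_gt1 : 1 < N by rewrite ltr1n.
have N_gt0 : 0 < N := lt_trans ltr01 N_gt1.
have marg1E m : marg1 p m = N^-1 by rewrite /marg1 p_unif div1r.
have marg1_gt0 m : 0 < marg1 p m by rewrite marg1E invr_gt0.
have diag : \sum_m p m m = 1 - eps.
  by rewrite eps_def -p_sum1 -sumrB; apply: eq_bigr => m _; rewrite (bigD1 m) //= addrK.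
have eps_ge0 : 0 <= eps by rewrite eps_def; apply: sumr_ge0 => m _; apply: sumr_ge0.
have eps_le1 : 0 <= 1 - eps by rewrite -diag; apply: sumr_ge0.
have Ninv_ge0 : 0 <= N^-1 by rewrite invr_ge0 ltW.
have Ninv_le1 : 0 <= 1 - N^-1 by rewrite subr_ge0 invf_le1 // ltW.
apply/ereal_infP => _ [q q_distr <-].
have sum_q : \sum_m marg1 p m * q m = N^-1.
  by under eq_bigr do rewrite marg1E; rewrite -mulr_sumr q_distr.2 mulr1.
have sum_1q : \sum_m marg1 p m * (1 - q m) = 1 - N^-1.
  by under eq_bigr do rewrite mulrBr mulr1; rewrite sumrB sum_q p_sum1.
apply: (le_Gext_sum G_nd G_convex G0) => //.
- by move=> m; apply: (Df_ge0 f_convex f1 (is_distr_cond p_ge0 marg1_gt0 m)).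
- rewrite -lee_fin -persp_binary_uniformE //.
  by apply: persp_add_ge0 => //; [exact: subrK | rewrite addrC subrK].
- rewrite -persp_binary_uniformE //.
  have := sum_Df_cond_ge f_convex p_ge0 marg1_gt0 q_distr.
  by rewrite diag -eps_def sum_q sum_1q.
Qed.
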